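(* Let $(\Omega,\mathcal{F},P)$ be a probability space, $\mathcal{X}$ a measurable space, $X:\Omega\to\mathcal{X}$ a measurable map (an act), $u:\mathcal{X}\to\mathbb{R}$ a measurable function, and $\beta\in(-1,\infty)$. For $v\in\mathbb{R}$ define $k_v:\mathcal{X}\to\mathbb{R}$ by $k_v(x)=\dfrac{u(x)+\beta v}{1+\beta}$ if $u(x)\ge v$ and $k_v(x)=u(x)$ if $u(x)<v$. Suppose $\mathbb{E}[u(X)]$ exists and is finite. Then for $v\in\mathbb{R}$ the following are equivalent: (1) $v=\mathbb{E}[k_v(X)]$; (2) $\mathbb{E}[(u(X)-v)^+]=(1+\beta)\,\mathbb{E}[(v-u(X))^+]$. In particular, such a $v$ exists and is unique.
   Context: $s^+=\max\{s,0\}$. The unique solution is denoted $\mathbb{E}_\beta[u(X)]$ (the expectile, or ''expectiled utility''). *)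

From HB Require Import structures.
From mathcomp Require Import all_boot all_order all_algebra.
From mathcomp Require Import all_classical all_reals all_analysis.
Set Implicit Arguments. Unset Strict Implicit. Unset Printing Implicit Defensive.
Import Order.TTheory GRing.Theory Num.Theory.
Local Open Scope ring_scope.

Definition posp {R : realType} (s : R) : R := Num.max s 0.

Definition kfun {R : realType} {Tx : Type} (u : Tx -> R) (beta v : R) (x : Tx) : R :=
  if v <= u x then (u x + beta * v) / (1 + beta) else u x.

From mathcomp Require Import all_boot all_order all_algebra.
From mathcomp Require Import all_classical all_reals all_analysis.
From mathcomp Require Import ring lra measurable_realfun.
Import Order.TTheory GRing.Theory Num.Theory.
Import numFieldNormedType.Exports.
Set Implicit Arguments. Unset Strict Implicit. Unset Printing Implicit Defensive.
Local Open Scope ring_scope.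

(* Write Y = u(X), m = E[Y], A(v) = E[(Y - v)^+] and B(v) = E[(v - Y)^+].
   Pointwise k_v(Y) = Y - beta/(1+beta) (Y - v)^+ and (v - Y)^+ = (Y - v)^+ - (Y - v),
   so both conditions say that the gap A(v) - (1+beta) B(v) = (1+beta)(m - v) - beta A(v)
   vanishes.  As A is nonincreasing and 1-Lipschitz, for v <= w the decrease of the gap,
   a + (1+beta)((w - v) - a) with a = A(v) - A(w) in [0, w - v], lies between
   min(1, 1+beta)(w - v) and max(1, 1+beta)(w - v); a continuous function decreasing
   at a positive linear rate has exactly one zero. *)

Section positive_part.
Variable R : realType.

Lemma posp_id (t : R) : 0 <= t -> posp t = t.
Proof. exact: max_l. Qed.

Lemma posp_eq0 (t : R) : t <= 0 -> posp t = 0.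
Proof. exact: max_r. Qed.

Lemma pospN (t : R) : posp (- t) = posp t - t.
Proof.
have [t0|t0] := leP 0 t.
  by rewrite posp_eq0 ?posp_id ?subrr // oppr_le0.
by rewrite (posp_eq0 (ltW t0)) posp_id ?sub0r // oppr_ge0 ltW.
Qed.

Lemma posp_sub_bounds (s t : R) : s <= t -> 0 <= posp t - posp s <= t - s.
Proof.
move=> st; have [s0|s0] := leP 0 s.
  by rewrite !posp_id ?subrr ?subr_ge0 ?st ?lexx //; apply: le_trans st.
have [t0|t0] := leP 0 t.
  by rewrite posp_id // (posp_eq0 (ltW s0)); apply/andP; split; lra.
by rewrite !posp_eq0 ?(ltW s0) ?(ltW t0) // subrr lexx subr_ge0.
Qed.

Lemma posp_norm_le (t : R) : `|posp t| <= `|t|.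
Proof.
have [t0|t0] := leP 0 t; first by rewrite posp_id.
by rewrite (posp_eq0 (ltW t0)) normr0.
Qed.

Lemma measurable_posp : measurable_fun setT (@posp R).
Proof. exact: (measurable_maxr (f := id) (g := cst 0)). Qed.

Lemma kfunE (T : Type) (u : T -> R) (beta v : R) (x : T) : 1 + beta != 0 ->
  kfun u beta v x = u x - beta / (1 + beta) * posp (u x - v).
Proof.
move=> nz; rewrite /kfun; have [vu|uv] := leP v (u x).
  by rewrite posp_id ?subr_ge0 //; field.
by rewrite posp_eq0 ?mulr0 ?subr0 // subr_le0 ltW.
Qed.

End positive_part.

Section decreasing_root.
Variable R : realType.
Implicit Types f : R -> R.

Lemma lipschitz_continuous f (k : R) : 0 < k ->
  (forall x y, `|f x - f y| <= k * `|x - y|) -> continuous f.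
Proof.
move=> k0 fk x; apply/cvgrPdist_lt => e e0; near=> y.
rewrite (le_lt_trans (fk x y)) // -ltr_pdivlMl //.
near: y; apply/nbhs_ballP; exists (k^-1 * e) => //=.
by rewrite mulr_gt0 ?invr_gt0.
Unshelve. all: by end_near.
Qed.

Lemma exists_unique_root f (c k : R) : 0 < c ->
  (forall v w, v <= w -> c * (w - v) <= f v - f w <= k * (w - v)) ->
  exists! v, f v = 0.
Proof.
move=> c0 fck.
have root_le v w : f v = 0 -> f w = 0 -> v <= w -> v = w.
  move=> fv fw vw; have /andP[+ _] := fck _ _ vw.
  rewrite fv fw subrr pmulr_rle0 // subr_le0 => wv.
  by apply/eqP; rewrite eq_le vw.
have fcont : continuous f.
  have k0 : 0 < k.
    have /andP[c1 k1] := fck 0 1 ler01; rewrite subr0 !mulr1 in c1 k1.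
    exact: lt_le_trans (le_trans c1 k1).
  apply: (@lipschitz_continuous f k k0) => x y.
  wlog xy : x y / x <= y.
    move=> sym; have [/sym //|/ltW /sym] := leP x y.
    by rewrite distrC (distrC y).
  have /andP[cf fk] := fck _ _ xy.
  have yx0 : 0 <= y - x by rewrite subr_ge0.
  rewrite (distrC x) !ger0_norm //.
  exact: le_trans (mulr_ge0 (ltW c0) yx0) cf.
set b := `|f 0| / c.
have cb : c * b = `|f 0| by rewrite mulrC divfK ?gt_eqF.
have b0 : 0 <= b by rewrite divr_ge0 // ltW.
have fb : f b <= 0.
  have /andP[+ _] := fck _ _ b0; rewrite subr0 cb.
  by have := ler_norm (f 0); lra.
have fNb : 0 <= f (- b).
  have /andP[+ _] := fck (- b) 0 (ge0_cp b0).1; rewrite sub0r opprK cb.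
  by have := ler_norm (- f 0); rewrite normrN; lra.
have [|v _ fv] := IVT (ge0_cp b0).2 (continuous_subspaceT fcont) (v := 0).
  by rewrite ge_min le_max fb fNb orbT.
exists v; split => // w fw.
by have [vw|/ltW wv] := leP v w; [apply: root_le | apply/esym/root_le].
Qed.

End decreasing_root.

Lemma EFin_Rintegral (d : measure_display) (T : measurableType d) (R : realType)
    (mu : {measure set T -> \bar R}) (D : set T) (f : T -> R) : measurable D ->
  mu.-integrable D (EFin \o f) ->
  (\int[mu]_(x in D) f x)%:E = (\int[mu]_(x in D) (f x)%:E)%E.
Proof. by move=> mD fi; rewrite fineK // integrable_fin_num. Qed.

Section expectile.
Variables (R : realType) (d : measure_display) (Omega : measurableType d).
Variables (P : probability Omega R) (Y : Omega -> R).
Hypotheses (mY : measurable_fun setT Y) (iY : P.-integrable setT (EFin \o Y)).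

Lemma Rintegral_cst_probability (r : R) : \int[P]_(_ in setT) r = r.
Proof.
rewrite Rintegral_cst // -[RHS]mulr1; congr (_ * _).
exact (congr1 fine (probability_setT P)).
Qed.

Let integrable_cst (r : R) : P.-integrable setT (EFin \o cst r).
Proof. exact: finite_measure_integrable_cst. Qed.

Let integrable_subr (v : R) : P.-integrable setT (EFin \o (fun w => Y w - v)).
Proof. exact: eq_integrable (integrableB _ iY (integrable_cst v)). Qed.

Lemma integrable_posp_subr (v : R) :
  P.-integrable setT (EFin \o (fun w => posp (Y w - v))).
Proof.
apply: le_integrable (integrable_subr v) => // [|w _]; last exact: posp_norm_le.
apply/measurable_EFinP; apply: measurableT_comp (@measurable_posp R) _.
exact: measurable_funB mY (measurable_cst _).
Qed.

Definition excess (v : R) := \int[P]_w posp (Y w - v).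
Definition shortfall (v : R) := \int[P]_w posp (v - Y w).

Lemma shortfallE (v : R) : shortfall v = excess v - (\int[P]_w Y w - v).
Proof.
transitivity (\int[P]_w (posp (Y w - v) - (Y w - v))).
  by apply: eq_Rintegral => w _; rewrite -pospN opprB.
rewrite (RintegralB _ (integrable_posp_subr v) (integrable_subr v)) //.
by rewrite (RintegralB _ iY (integrable_cst v)) // Rintegral_cst_probability.
Qed.

Lemma integrable_posp_subl (v : R) :
  P.-integrable setT (EFin \o (fun w => posp (v - Y w))).
Proof.
apply: eq_integrable (integrableB _ (integrable_posp_subr v) (integrable_subr v)) => // w _.
by rewrite /= -EFinB -pospN opprB.
Qed.

Lemma excess_sub_bounds (v w : R) : v <= w -> 0 <= excess v - excess w <= w - v.
Proof.
move=> vw; have bounds x := posp_sub_bounds (lerB (lexx (Y x)) vw).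
rewrite /excess -(RintegralB _ (integrable_posp_subr v) (integrable_posp_subr w)) //.
rewrite -(Rintegral_cst_probability (w - v)); apply/andP; split.
  by apply: Rintegral_ge0 => x _; case/andP: (bounds x).
apply: le_Rintegral (integrable_cst _) _ => // [|x _].
  exact: eq_integrable (integrableB _ (integrable_posp_subr v) (integrable_posp_subr w)).
case/andP: (bounds x) => _ /le_trans; apply.
by rewrite /cst opprB addrC addrA subrK.
Qed.

Lemma integral_kfun (beta v : R) : 1 + beta != 0 ->
  (\int[P]_w (kfun Y beta v w)%:E = (\int[P]_w Y w - beta / (1 + beta) * excess v)%:E)%E.
Proof.
move=> nz; set c := beta / (1 + beta).
have ic : P.-integrable setT (EFin \o (fun w => c * posp (Y w - v))).
  exact: eq_integrable (integrableZl _ c (integrable_posp_subr v)).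
rewrite (eq_integral (fun w => (Y w - c * posp (Y w - v))%:E)) => [|w _]; last by rewrite kfunE.
rewrite -EFin_Rintegral //; last exact: eq_integrable (integrableB _ iY ic).
by rewrite (RintegralB _ iY ic) // RintegralZl //; exact: integrable_posp_subr.
Qed.

Definition expectile_gap (beta v : R) := excess v - (1 + beta) * shortfall v.

Lemma expectile_gapE (beta v : R) :
  expectile_gap beta v = (1 + beta) * (\int[P]_w Y w - v) - beta * excess v.
Proof. by rewrite /expectile_gap shortfallE; ring. Qed.

Lemma kfun_fixpointP (beta v : R) : 1 + beta != 0 ->
  (v%:E = \int[P]_w (kfun Y beta v w)%:E)%E <-> expectile_gap beta v = 0.
Proof.
move=> nz; rewrite integral_kfun // expectile_gapE.
have -> : (1 + beta) * (\int[P]_w Y w - v) - beta * excess v =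
    (1 + beta) * (\int[P]_w Y w - beta / (1 + beta) * excess v - v) by field.
split => [[<-]|/eqP]; first by rewrite subrr mulr0.
by rewrite mulf_eq0 (negbTE nz) subr_eq0 => /eqP ->.
Qed.

Lemma excess_shortfallP (beta v : R) :
  (\int[P]_w (posp (Y w - v))%:E = (1 + beta)%:E * \int[P]_w (posp (v - Y w))%:E)%E <->
  expectile_gap beta v = 0.
Proof.
rewrite -!EFin_Rintegral //; [|exact: integrable_posp_subl|exact: integrable_posp_subr].
rewrite -EFinM /expectile_gap /excess /shortfall; split => [[->]|/eqP]; first exact: subrr.
by rewrite subr_eq0 => /eqP ->.
Qed.

Lemma expectile_gap_sub_bounds (beta v w : R) : -1 < beta -> v <= w ->
  Num.min 1 (1 + beta) * (w - v) <= expectile_gap beta v - expectile_gap beta w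
  <= Num.max 1 (1 + beta) * (w - v).
Proof.
move=> hb vw; have /andP[a0 aw] := excess_sub_bounds vw.
have -> : expectile_gap beta v - expectile_gap beta w =
    (excess v - excess w) + (1 + beta) * ((w - v) - (excess v - excess w)).
  by rewrite !expectile_gapE; ring.
move: (excess v - excess w) a0 aw => a a0 aw.
by have [b1|b1] := leP 1 (1 + beta); apply/andP; split; nra.
Qed.

Lemma exists_unique_expectile_gap_root (beta : R) : -1 < beta ->
  exists! v, expectile_gap beta v = 0.
Proof.
move=> hb; apply: (@exists_unique_root _ _ (Num.min 1 (1 + beta)) (Num.max 1 (1 + beta))).
  by rewrite lt_min ltr01 /=; lra.
by move=> v w; apply: expectile_gap_sub_bounds.
Qed.

End expectile.

Local Open Scope ereal_scope.

Theorem proposition1 (R : realType) (d : measure_display) (Omega : measurableType d)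
  (P : probability Omega R) (d' : measure_display) (Xs : measurableType d')
  (X : Omega -> Xs) (u : Xs -> R) (beta : R) :
  measurable_fun setT X -> measurable_fun setT u -> (-1 < beta)%R ->
  P.-integrable setT (fun w => (u (X w))%:E) ->
  (forall v : R,
     v%:E = \int[P]_w (kfun u beta v (X w))%:E <->
     \int[P]_w (posp (u (X w) - v))%:E
       = (1 + beta)%:E * \int[P]_w (posp (v - u (X w)))%:E)
  /\ (exists! v : R, v%:E = \int[P]_w (kfun u beta v (X w))%:E)
  /\ (exists! v : R, \int[P]_w (posp (u (X w) - v))%:E
                       = (1 + beta)%:E * \int[P]_w (posp (v - u (X w)))%:E).
Proof.
move=> mX mu hb iuX.
have mY : measurable_fun setT (u \o X) := measurableT_comp mu mX.
have nz : (1 + beta != 0)%R by rewrite gt_eqF //; lra.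
pose gap := expectile_gap P (u \o X) beta.
have fixpointP v : v%:E = \int[P]_w (kfun u beta v (X w))%:E <-> gap v = 0%R :=
  kfun_fixpointP mY iuX v nz.
have deviationP v : \int[P]_w (posp (u (X w) - v))%:E
    = (1 + beta)%:E * \int[P]_w (posp (v - u (X w)))%:E <-> gap v = 0%R :=
  excess_shortfallP mY iuX beta v.
have [v [gap0 gap_uniq]] := exists_unique_expectile_gap_root mY iuX hb.
split; first by move=> w; rewrite fixpointP deviationP.
split; exists v; split.
- exact/fixpointP.
- by move=> w /fixpointP; apply: gap_uniq.
- exact/deviationP.
- by move=> w /deviationP; apply: gap_uniq.
Qed.
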